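(* Let $\mathcal H$ be a Hilbert space, let $J$ be a directed set, let $\{U_j\}_{j\in J}$ be a net of unitary operators on $\mathcal H$, and let $\{\ell_j\}_{j\in J}\subset[0,\infty)$ satisfy $\ell_j\to\infty$. Assume there exists a self-adjoint operator $A$ in $\mathcal H$ such that $U_j\in C^1(A)$ for each $j\in J$, and suppose that the strong limit $$D:=\operatorname{s-lim}_j\frac{1}{\ell_j}[A,U_j]U_j^{-1}$$ exists (the operators being defined for $j$ large enough that $\ell_j\neq0$). Then $\lim_j\langle\varphi,U_j\psi\rangle=0$ for all $\varphi\in\ker(D)^\perp$ and all $\psi\in\mathcal H$.
   Context: The scalar product $\langle\cdot,\cdot\rangle$ is antilinear in the first argument. For a self-adjoint operator $A$ with domain $\mathrm{dom}(A)$ and a bounded operator $S$ on $\mathcal H$, one writes $S\in C^1(A)$ if the map $\mathbb R\ni t\mapsto e^{-itA}Se^{itA}$ is strongly continuously differentiable; equivalently, the quadratic form $\mathrm{dom}(A)\ni\varphi\mapsto\langle A\varphi,S\varphi\rangle-\langle \varphi,SA\varphi\rangle$ is continuous for the topology of $\mathcal H$. In that case $[A,S]$ denotes the bounded operator associated with the continuous extension of this form (i.e. $[A,S]=AS-SA$ in the form sense on $\mathrm{dom}(A)$). *)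

From HB Require Import structures.
From mathcomp Require Import all_boot all_order all_algebra.
From mathcomp Require Import complex.
From mathcomp Require Import all_classical all_reals topology normedtype.
Set Implicit Arguments.
Unset Strict Implicit.
Unset Printing Implicit Defensive.
Import Order.TTheory GRing.Theory Num.Theory.
Import numFieldNormedType.Exports.
Local Open Scope classical_set_scope.
Local Open Scope ring_scope.

Definition is_hilbert (R : realType) (H : completeNormedModType R[i])
    (ip : H -> H -> R[i]) : Prop :=
  [/\ forall (a : R[i]) (x y z : H), ip x (a *: y + z) = a * ip x y + ip x z,
      forall x y : H, ip y x = (ip x y)^*
    & forall x : H, ip x x = `|x| ^+ 2].

Definition lin_op (R : realType) (H : completeNormedModType R[i]) (T : H -> H) :=
  forall (a : R[i]) (x y : H), T (a *: x + y) = a *: T x + T y.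

Definition bounded_op (R : realType) (H : completeNormedModType R[i]) (T : H -> H) :=
  lin_op T /\ continuous T.

Definition unitary_op (R : realType) (H : completeNormedModType R[i])
    (ip : H -> H -> R[i]) (U Uinv : H -> H) : Prop :=
  [/\ lin_op U,
      forall x y, ip (U x) (U y) = ip x y,
      forall x, U (Uinv x) = x
    & forall x, Uinv (U x) = x].

(** Self-adjoint (possibly unbounded) operator A with domain domA:
    domA is a dense linear subspace, A is linear on domA, and A* = A
    (including equality of domains): psi ∈ dom(A* ) with A* psi = eta iff
    <A phi, psi> = <phi, eta> for all phi ∈ domA. *)
Definition self_adjoint (R : realType) (H : completeNormedModType R[i])
    (ip : H -> H -> R[i]) (domA : set H) (A : H -> H) : Prop :=
  [/\ domA 0,
      forall (a : R[i]) x y, domA x -> domA y -> domA (a *: x + y),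
      forall (a : R[i]) x y, domA x -> domA y -> A (a *: x + y) = a *: A x + A y,
      closure domA = setT
    & forall psi eta : H,
        (forall phi, domA phi -> ip (A phi) psi = ip phi eta) <->
        (domA psi /\ eta = A psi)].

(** [is_commutator ip domA A S B]: B is the bounded operator associated with the
    continuous extension of the form <A phi, S psi> - <phi, S A psi> on dom(A).
    Existence of such B is exactly S ∈ C^1(A), and then B = [A,S]
    (B is unique since dom(A) is dense). *)
Definition is_commutator (R : realType) (H : completeNormedModType R[i])
    (ip : H -> H -> R[i]) (domA : set H) (A S B : H -> H) : Prop :=
  bounded_op B /\
  forall phi psi, domA phi -> domA psi ->
    ip phi (B psi) = ip (A phi) (S psi) - ip phi (S (A psi)).

Definition directed (J : Type) (le : J -> J -> Prop) : Prop :=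
  [/\ inhabited J,
      forall i, le i i,
      forall i j k, le i j -> le j k -> le i k
    & forall i j, exists k, le i k /\ le j k].

Definition net_cvg (J : Type) (le : J -> J -> Prop) (K : numDomainType)
    (V : normedZmodType K) (f : J -> V) (l : V) : Prop :=
  forall eps : K, 0 < eps -> exists j0, forall j, le j0 j -> `|f j - l| < eps.

Definition net_to_infty (J : Type) (le : J -> J -> Prop) (R : realType)
    (f : J -> R) : Prop :=
  forall M : R, exists j0, forall j, le j0 j -> M < f j.

From HB Require Import structures.
From mathcomp Require Import all_boot all_order all_algebra.
From mathcomp Require Import complex.
From mathcomp Require Import all_classical all_reals topology normedtype.
From mathcomp Require Import interval_inference ring lra.
Import Order.TTheory GRing.Theory Num.Theory.
Import numFieldNormedType.Exports.
Local Open Scope classical_set_scope.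
Local Open Scope complex_scope.
Local Open Scope ring_scope.
Set Implicit Arguments.
Unset Strict Implicit.

(* The operators T_j := ell_j^-1 [A, U_j] U_j^-1 are symmetric: self-adjointness
   of A shows that U_j maps dom(A) into itself with A U_j = [A, U_j] + U_j A, which
   gives <[A, U_j] x, U_j y> = <U_j x, [A, U_j] y> on dom(A), and then everywhere
   by density. Hence their strong limit D is linear and symmetric. For chi, psi in
   dom(A), <T_j chi, U_j psi> = ell_j^-1 (<A chi, U_j psi> - <chi, U_j A psi>) is
   O(1/ell_j), so <D chi, U_j psi> -> 0. Since D is symmetric, the projection
   theorem shows that ker(D)^perp lies in the closure of D(dom A); as the U_j are
   isometries, the convergence extends to that closure in phi and to the closure
   of dom(A) in psi. *)

Lemma mulr_lt_of_lt_divD1 (F : numFieldType) (a b e : F) :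
  0 <= a -> 0 <= b -> a < e / (b + 1) -> a * b < e.
Proof.
move=> a_ge0 b_ge0 a_lt.
rewrite (le_lt_trans (ler_wpM2l a_ge0 (ler_wpDr ler01 (lexx b)))) //.
by rewrite -ltr_pdivlMr ?ltr_wpDl.
Qed.

Section InnerProduct.
Variables (R : realType) (H : completeNormedModType R[i]) (ip : H -> H -> R[i]).
Hypothesis hH : is_hilbert ip.

Lemma ipDr x y z : ip x (y + z) = ip x y + ip x z.
Proof. by case: hH => linr _ _; have := linr 1 x y z; rewrite scale1r mul1r. Qed.

Lemma ip0r x : ip x 0 = 0.
Proof. by apply: (addrI (ip x 0)); rewrite -ipDr !addr0. Qed.

Lemma ipZr a x y : ip x (a *: y) = a * ip x y.
Proof.
by case: hH => linr _ _; have := linr a x y 0; rewrite !addr0 ip0r addr0.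
Qed.

Lemma ipNr x y : ip x (- y) = - ip x y.
Proof. by rewrite -scaleN1r ipZr mulN1r. Qed.

Lemma ipBr x y z : ip x (y - z) = ip x y - ip x z.
Proof. by rewrite ipDr ipNr. Qed.

Lemma ipC x y : ip y x = (ip x y)^*.
Proof. by case: hH. Qed.

Lemma ipxx x : ip x x = `|x| ^+ 2.
Proof. by case: hH. Qed.

Lemma ipDl x y z : ip (y + z) x = ip y x + ip z x.
Proof. by rewrite [ip (y + z) x]ipC [ip y x]ipC [ip z x]ipC ipDr rmorphD. Qed.

Lemma ipZl a x y : ip (a *: y) x = a^* * ip y x.
Proof. by rewrite [ip (a *: y) x]ipC [ip y x]ipC ipZr rmorphM. Qed.

Lemma ipNl x y : ip (- y) x = - ip y x.
Proof. by rewrite [ip (- y) x]ipC [ip y x]ipC ipNr rmorphN. Qed.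

Lemma ipBl x y z : ip (y - z) x = ip y x - ip z x.
Proof. by rewrite ipDl ipNl. Qed.

Lemma ipxx_eq0 x : ip x x = 0 -> x = 0.
Proof. by rewrite ipxx => /eqP; rewrite expf_eq0 /= normr_eq0 => /eqP. Qed.

Lemma cauchy_schwarz x y : `|ip x y| <= `|x| * `|y|.
Proof.
have [->|y0] := eqVneq y 0; first by rewrite ip0r !normr0 mulr0.
set n := `|y| ^+ 2; set c := ip y x.
have n_gt0 : 0 < n by rewrite exprn_gt0 // normr_gt0.
have conj_cn : (c / n)^* = c^* / n.
  rewrite rmorphM rmorphV ?unitfE ?gt_eqF //; congr (_ * _^-1).
  by apply/CrealP; rewrite realX // normr_real.
have ipxy : ip x y = c^* by rewrite /c -ipC.
have : 0 <= ip (x - (c / n) *: y) (x - (c / n) *: y) by rewrite ipxx exprn_ge0.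
have -> : ip (x - (c / n) *: y) (x - (c / n) *: y) = `|x| ^+ 2 - c * c^* / n.
  rewrite ipBl !ipBr !ipZl !ipZr ipxy -/c !ipxx -/n conj_cn.
  by field; rewrite gt_eqF.
rewrite subr_ge0 -normCK ler_pdivrMr // -exprMn => le_c.
by rewrite ipxy norm_conjC -(ler_pXn2r (n := 2)) // nnegrE ?mulr_ge0.
Qed.

Lemma ip_lipschitzr x u v : `|ip x u - ip x v| <= `|x| * `|u - v|.
Proof. by rewrite -ipBr cauchy_schwarz. Qed.

Lemma ip_lipschitzl y u v : `|ip u y - ip v y| <= `|y| * `|u - v|.
Proof. by rewrite -ipBl mulrC cauchy_schwarz. Qed.

End InnerProduct.

Section RealNorm.
Variables (R : realType) (V : normedModType R[i]).

(* The norm of a normed [R[i]]-module is valued in [R[i]]; [rnorm] is it as a real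
   number, so that infima and real arithmetic are available. *)
Definition rnorm (x : V) : R := complex.Re `|x|.

Lemma complex_ge0E (z : R[i]) : 0 <= z -> z = (complex.Re z)%:C.
Proof. by move=> z_ge0; rewrite RRe_real // ger0_real. Qed.

Lemma rnormE x : `|x| = (rnorm x)%:C.
Proof. exact: complex_ge0E. Qed.

Lemma rnorm_ge0 x : 0 <= rnorm x.
Proof. by have := normr_ge0 x; rewrite rnormE lecR. Qed.

Lemma rnormD x y : rnorm (x + y) <= rnorm x + rnorm y.
Proof. by have := ler_normD x y; rewrite !rnormE -rmorphD lecR. Qed.

Lemma rnormB_sym x y : rnorm (x - y) = rnorm (y - x).
Proof. by rewrite /rnorm distrC. Qed.

Lemma rnorm_lt x (t : R) : (rnorm x < t) = (`|x| < t%:C).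
Proof. by rewrite rnormE ltcR. Qed.

Lemma rnormMn x n : rnorm (n%:R *: x) = n%:R * rnorm x.
Proof.
by apply: complexI; rewrite rmorphM /= rmorph_nat -!rnormE normrZ normr_nat.
Qed.

End RealNorm.

Lemma rnorm_parallelogram (R : realType) (H : completeNormedModType R[i])
    (ip : H -> H -> R[i]) : is_hilbert ip -> forall u v : H,
  rnorm (u + v) ^+ 2 + rnorm (u - v) ^+ 2 = 2 * rnorm u ^+ 2 + 2 * rnorm v ^+ 2.
Proof.
move=> hH u v; apply: complexI.
rewrite !rmorphD !rmorphM /= rmorph_nat -!rnormE -!expr2 -!(ipxx hH).
by rewrite !(ipDl hH) !(ipDr hH) !(ipNl hH) !(ipNr hH); ring.
Qed.

Section Density.
Variables (R : realType) (H : completeNormedModType R[i]).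

Lemma closure_normP (P : set H) x :
  closure P x -> forall e : R[i], 0 < e -> exists2 a, P a & `|x - a| < e.
Proof.
move=> Px e e_gt0; have [a [Pa]] := Px _ (nbhsx_ballx x e e_gt0).
by rewrite -ball_normE; exists a.
Qed.

Lemma lipschitz_closure_eq0 (P : set H) (f : H -> R[i]) (k : R[i]) :
  0 <= k -> (forall u v, `|f u - f v| <= k * `|u - v|) ->
  (forall a, P a -> f a = 0) -> forall u, closure P u -> f u = 0.
Proof.
move=> k_ge0 f_lip f0 u Pu; apply/eqP/negPn/negP => fu0.
have fu_gt0 : 0 < `|f u| by rewrite normr_gt0.
have [a Pa ua] := closure_normP Pu (divr_gt0 fu_gt0 (ltr_wpDl k_ge0 ltr01)).
have := mulr_lt_of_lt_divD1 (normr_ge0 _) k_ge0 ua.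
by rewrite mulrC => /(le_lt_trans (f_lip u a)); rewrite (f0 a Pa) subr0 ltxx.
Qed.

Lemma lipschitz_dense_eq0 (P : set H) (f : H -> R[i]) (k : R[i]) :
  closure P = setT -> 0 <= k -> (forall u v, `|f u - f v| <= k * `|u - v|) ->
  (forall a, P a -> f a = 0) -> forall u, f u = 0.
Proof.
move=> P_dense k_ge0 f_lip f0 u.
by apply: (lipschitz_closure_eq0 k_ge0 f_lip f0); rewrite P_dense.
Qed.

End Density.

Section LinearOperator.
Variables (R : realType) (H : completeNormedModType R[i]) (T : H -> H).
Hypothesis hT : lin_op T.

Lemma lin0 : T 0 = 0.
Proof.
have := hT 1 0 0; rewrite !scale1r !addr0 => /esym.
by rewrite -[X in _ = X]addr0 => /addrI.
Qed.

Lemma linD x y : T (x + y) = T x + T y.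
Proof. by have := hT 1 x y; rewrite !scale1r. Qed.

Lemma linZ a x : T (a *: x) = a *: T x.
Proof. by have := hT a x 0; rewrite !addr0 lin0 addr0. Qed.

Lemma linN x : T (- x) = - T x.
Proof. by rewrite -scaleN1r linZ scaleN1r. Qed.

Lemma linB x y : T (x - y) = T x - T y.
Proof. by rewrite linD linN. Qed.

Lemma continuous_lin_op_bounded : continuous T ->
  exists2 k, 0 <= k & forall x, `|T x| <= k * `|x|.
Proof.
move=> cT; have [d d_gt0 Td] : exists2 d, 0 < d & forall x, `|x| < d -> `|T x| < 1.
  have /cvgrPdist_lt/(_ 1 ltr01)/nbhs_normP[d d_gt0 Td] := cT 0.
  by exists d => // x xd; have := Td x; rewrite /= lin0 !sub0r !normrN; apply.
exists (2 / d); first by rewrite divr_ge0 // ltW.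
move=> x; have [->|x0] := eqVneq x 0; first by rewrite lin0 !normr0 mulr0.
have x_gt0 : 0 < `|x| by rewrite normr_gt0.
pose s := d / (2 * `|x|).
have s_gt0 : 0 < s by rewrite divr_gt0 // mulr_gt0.
have : `|T (s *: x)| < 1.
  apply: Td; rewrite normrZ gtr0_norm //.
  have -> : s * `|x| = d / 2 by rewrite /s; field; rewrite gt_eqF.
  by rewrite ltr_pdivrMr // ltr_pMr // ltr1n.
rewrite linZ normrZ gtr0_norm // -ltr_pdivlMl // => /ltW.
by rewrite /s invf_div mulrC mulrA mul1r mulrAC.
Qed.

End LinearOperator.

Section Nets.
Variables (R : realType) (J : Type) (le : J -> J -> Prop).
Hypothesis hJ : directed le.

Lemma net_eventually_and (P Q : J -> Prop) :
  (exists j0, forall j, le j0 j -> P j) -> (exists j1, forall j, le j1 j -> Q j) ->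
  exists k, forall j, le k j -> P j /\ Q j.
Proof.
case: hJ => _ _ le_trans le_ub [j0 P_j0] [j1 Q_j1].
have [k [j0k j1k]] := le_ub j0 j1.
by exists k => j kj; split; [apply: P_j0 | apply: Q_j1]; apply: le_trans kj.
Qed.

Lemma net_cvg_unique (V : normedZmodType R[i]) (f : J -> V) (l l' : V) :
  net_cvg le f l -> net_cvg le f l' -> l = l'.
Proof.
move=> fl fl'; apply/eqP/negPn/negP => ll'.
have d_gt0 : 0 < `|l - l'| by rewrite normr_gt0 subr_eq0.
have [k /(_ k)[]] := net_eventually_and (fl _ (divr_gt0 d_gt0 (ltr0Sn _ 1)))
  (fl' _ (divr_gt0 d_gt0 (ltr0Sn _ 1))).
  by case: hJ.
move=> fk_l fk_l'; have := ltrD fk_l fk_l'; rewrite -splitr distrC.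
by move/(le_lt_trans (ler_distD (f k) l l')); rewrite ltxx.
Qed.

Lemma net_cvgD (V : normedZmodType R[i]) (f g : J -> V) (l l' : V) :
  net_cvg le f l -> net_cvg le g l' -> net_cvg le (fun j => f j + g j) (l + l').
Proof.
move=> fl gl' e e_gt0; have e2_gt0 : 0 < e / 2 by rewrite divr_gt0.
have [k fg_k] := net_eventually_and (fl _ e2_gt0) (gl' _ e2_gt0).
exists k => j /fg_k[fj gj]; rewrite opprD addrACA [e]splitr.
exact: le_lt_trans (ler_normD _ _) (ltrD fj gj).
Qed.

Lemma net_cvg_lipschitz (V W : normedZmodType R[i]) (F : V -> W) (k : R[i])
    (f : J -> V) (l : V) :
  0 <= k -> (forall u v, `|F u - F v| <= k * `|u - v|) ->
  net_cvg le f l -> net_cvg le (fun j => F (f j)) (F l).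
Proof.
move=> k_ge0 F_lip fl e e_gt0.
have [j0 fj0] := fl _ (divr_gt0 e_gt0 (ltr_wpDl k_ge0 ltr01)).
exists j0 => j /fj0 fj; apply: le_lt_trans (F_lip _ _) _.
by rewrite mulrC mulr_lt_of_lt_divD1.
Qed.

Lemma net_cvg0_le (V W : normedZmodType R[i]) (f : J -> V) (g : J -> W) (k : R[i]) :
  0 <= k -> (forall j, `|f j| <= k * `|g j|) -> net_cvg le g 0 -> net_cvg le f 0.
Proof.
move=> k_ge0 f_le g0 e e_gt0.
have [j0 gj0] := g0 _ (divr_gt0 e_gt0 (ltr_wpDl k_ge0 ltr01)).
exists j0 => j /gj0; rewrite !subr0 => gj; apply: le_lt_trans (f_le j) _.
by rewrite mulrC mulr_lt_of_lt_divD1.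
Qed.

Lemma net_to_infty_inv (ell : J -> R) :
  net_to_infty le ell -> net_cvg le (fun j => ((ell j)^-1)%:C) 0.
Proof.
move=> ell_infty e e_gt0; have eE := complex_ge0E (ltW e_gt0).
set t := complex.Re e in eE; have t_gt0 : 0 < t by rewrite -ltcR -eE.
have [j0 ell_big] := ell_infty t^-1; exists j0 => j /ell_big tV_lt.
have ell_gt0 : 0 < ell j by rewrite (lt_trans _ tV_lt) // invr_gt0.
rewrite subr0 ger0_norm ?lecR ?invr_ge0 ?ltW // eE ltcR.
by rewrite -(ltf_pV2 _ _) ?invrK // posrE invr_gt0.
Qed.

End Nets.

Section Commutator.
Variables (R : realType) (H : completeNormedModType R[i]) (ip : H -> H -> R[i]).
Variables (S Sinv A C : H -> H) (domA : set H).
Hypotheses (hH : is_hilbert ip) (hS : unitary_op ip S Sinv).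
Hypotheses (hA : self_adjoint ip domA A) (hC : is_commutator ip domA A S C).

Lemma unitary_lin : lin_op S. Proof. by case: hS. Qed.
Lemma unitaryK x : S (Sinv x) = x. Proof. by case: hS. Qed.
Lemma unitaryKV x : Sinv (S x) = x. Proof. by case: hS. Qed.

Lemma unitary_norm x : `|S x| = `|x|.
Proof.
apply/eqP; rewrite -(eqrXn2 (n := 2)) // -!(ipxx hH).
by case: hS => _ -> _ _.
Qed.

Lemma unitary_inv_lin : lin_op Sinv.
Proof.
move=> a x y; rewrite -{1}(unitaryK x) -{1}(unitaryK y).
by rewrite -(linZ unitary_lin) -(linD unitary_lin) unitaryKV.
Qed.

Lemma self_adjoint_sym x y : domA x -> domA y -> ip (A x) y = ip x (A y).
Proof.
move=> domx domy; have [_ _ _ _ adjA] := hA.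
exact: (adjA y (A y)).2 (conj domy erefl) x domx.
Qed.

(* This uses dom(A^* ) = dom(A), i.e. self-adjointness rather than symmetry. *)
Lemma commutator_domA x :
  domA x -> domA (S x) /\ A (S x) = C x + S (A x).
Proof.
move=> domx; have [_ _ _ _ adjA] := hA.
have [domSx <-] : domA (S x) /\ C x + S (A x) = A (S x).
  apply/adjA => y domy.
  by rewrite (ipDr hH); case: hC => _ -> //; rewrite subrK.
by [].
Qed.

Lemma commutator_sym_domA a b : domA a -> domA b ->
  ip (C a) (S b) = ip (S a) (C b).
Proof.
move=> doma domb; have [domSa ASa] := commutator_domA doma.
have [domSb ASb] := commutator_domA domb.
have -> : C a = A (S a) - S (A a) by rewrite ASa addrK.
have -> : C b = A (S b) - S (A b) by rewrite ASb addrK.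
rewrite (ipBl hH) (ipBr hH) (self_adjoint_sym domSa domSb).
by case: hS => _ ipS _ _; rewrite !ipS (self_adjoint_sym doma domb).
Qed.

Lemma commutator_sym x y : ip (C x) (S y) = ip (S x) (C y).
Proof.
(* Extend the identity from dom(A) one variable at a time: both sides are
   Lipschitz in each variable because [C] is bounded. *)
have domA_dense : closure domA = setT by case: hA.
have [[linC contC] _] := hC.
have [k k_ge0 C_le] := continuous_lin_op_bounded linC contC.
pose g u v := ip (C u) (S v) - ip (S u) (C v).
have glipl v u u' : `|g u v - g u' v| <= (`|S v| * k + `|C v|) * `|u - u'|.
  have -> : g u v - g u' v =
      (ip (C u) (S v) - ip (C u') (S v)) - (ip (S u) (C v) - ip (S u') (C v)).
    by rewrite /g; ring.
  rewrite mulrDl -mulrA (le_trans (ler_normB _ _)) // lerD //.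
    by rewrite (le_trans (ip_lipschitzl hH _ _ _)) // ler_wpM2l // -(linB linC).
  rewrite (le_trans (ip_lipschitzl hH _ _ _)) //.
  by rewrite -(linB unitary_lin) unitary_norm.
have glipr u v v' : `|g u v - g u v'| <= (`|C u| + `|S u| * k) * `|v - v'|.
  have -> : g u v - g u v' =
      (ip (C u) (S v) - ip (C u) (S v')) - (ip (S u) (C v) - ip (S u) (C v')).
    by rewrite /g; ring.
  rewrite mulrDl -mulrA (le_trans (ler_normB _ _)) // lerD //.
    rewrite (le_trans (ip_lipschitzr hH _ _ _)) //.
    by rewrite -(linB unitary_lin) unitary_norm.
  by rewrite (le_trans (ip_lipschitzr hH _ _ _)) // ler_wpM2l // -(linB linC).
have g0_domA u b : domA b -> g u b = 0.
  move=> domb; apply: (lipschitz_dense_eq0 domA_dense _ (glipl b)) => [|a doma].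
    by rewrite addr_ge0 // mulr_ge0.
  by rewrite /g commutator_sym_domA // subrr.
apply/eqP; rewrite -subr_eq0; apply/eqP; move: y.
apply: (lipschitz_dense_eq0 domA_dense _ (glipr x)) => [|b /(g0_domA x)//].
by rewrite addr_ge0 // mulr_ge0.
Qed.

Lemma commutator_adjoint x y : ip (C (Sinv x)) y = ip x (C (Sinv y)).
Proof. by rewrite -{1}(unitaryK y) commutator_sym unitaryK. Qed.

Lemma scaled_commutator_adjoint (t : R) x y :
  ip (t%:C *: C (Sinv x)) y = ip x (t%:C *: C (Sinv y)).
Proof.
rewrite (ipZl hH) (ipZr hH) commutator_adjoint; congr (_ * _).
by apply/CrealP; rewrite complex_real.
Qed.

Lemma scaled_commutator_lin (t : R) : lin_op (fun x => t%:C *: C (Sinv x)).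
Proof.
have [[linC _] _] := hC; move=> a x y /=.
by rewrite unitary_inv_lin linC scalerDr !scalerA mulrC.
Qed.

Lemma commutator_ip_le x y : domA x -> domA y ->
  `|ip x (C y)| <= `|A x| * `|y| + `|x| * `|A y|.
Proof.
move=> domx domy; case: hC => _ -> //.
rewrite (le_trans (ler_normB _ _)) // lerD //.
  by rewrite (le_trans (cauchy_schwarz hH _ _)) // unitary_norm.
by rewrite (le_trans (cauchy_schwarz hH _ _)) // unitary_norm.
Qed.

End Commutator.

Section Projection.
Variables (R : realType) (H : completeNormedModType R[i]) (ip : H -> H -> R[i]).
Hypothesis hH : is_hilbert ip.

Lemma ip_eq0_of_rnorm_min r y :
  (forall s : R[i], rnorm r <= rnorm (r - s *: y)) -> ip y r = 0.
Proof.
move=> r_min; set c := ip y r; pose s : R := (rnorm y ^+ 2 + 1)^-1.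
have y2_ge0 : 0 <= rnorm y ^+ 2 := sqr_ge0 _.
have s_gt0 : 0 < s by rewrite invr_gt0 ltr_wpDl.
have s_y2 : s * (rnorm y ^+ 2 + 1) = 1 by rewrite mulVf // gt_eqF // ltr_wpDl.
have conj_sc : (s%:C * c)^* = s%:C * c^*.
  by rewrite rmorphM; congr (_ * _); apply/CrealP; rewrite complex_real.
(* Moving [r] by [s c y] lowers [|r|^2] by [s |c|^2 (2 - s |y|^2)], which is
   positive unless [c = 0] since [s |y|^2 < 1]. *)
have expand : `|r - (s%:C * c) *: y| ^+ 2 =
    `|r| ^+ 2 - 2 * s%:C * `|c| ^+ 2 + s%:C ^+ 2 * `|c| ^+ 2 * `|y| ^+ 2.
  rewrite -!(ipxx hH) (ipBl hH) !(ipBr hH) !(ipZl hH) !(ipZr hH) conj_sc normCK.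
  by rewrite (ipC hH y r) -/c (ipxx hH y); ring.
have [q q_ge0 cq] : exists2 q : R, 0 <= q & `|c| = q%:C.
  have cE := complex_ge0E (normr_ge0 c).
  by exists (complex.Re `|c|) => //; have := normr_ge0 c; rewrite {1}cE lecR.
have expandR : rnorm (r - (s%:C * c) *: y) ^+ 2 =
    rnorm r ^+ 2 - 2 * s * q ^+ 2 + s ^+ 2 * q ^+ 2 * rnorm y ^+ 2.
  apply: complexI; rewrite !rmorphD !rmorphN !rmorphM /= rmorph_nat.
  by rewrite -!rnormE -cq -!expr2 expand.
have := r_min (s%:C * c); rewrite -(ler_pXn2r (n := 2)) ?nnegrE ?rnorm_ge0 //.
rewrite expandR => q_le.
have ss_gt0 : 0 < s * (1 + s) by rewrite mulr_gt0 // addr_gt0.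
have : q ^+ 2 * (s * (1 + s)) <= 0 by nra.
rewrite pmulr_lle0 // => q2_le0.
by apply/eqP; rewrite -normr_eq0 cq (_ : q = 0) //; nra.
Qed.

Variables (M : set H) (phi : H).
Hypotheses (M0 : M 0) (M_lin : forall a x y, M x -> M y -> M (a *: x + y)).

Let dists := [set rnorm (phi - m) | m in M].
Let dist := inf dists.

Let dists_has_inf : has_inf dists.
Proof.
split; first by exists (rnorm (phi - 0)), 0.
by exists 0 => _ [m _ <-]; apply: rnorm_ge0.
Qed.

Let dist_ge0 : 0 <= dist.
Proof.
by apply: lb_le_inf dists_has_inf.1 _ => _ [m _ <-]; apply: rnorm_ge0.
Qed.

Let dist_le m : M m -> dist <= rnorm (phi - m).
Proof. by move=> Mm; apply: (ge_inf dists_has_inf.2); exists m. Qed.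

Let dist_le_closure q : closure M q -> dist <= rnorm (phi - q).
Proof.
move=> Mq; apply/ler_addgt0Pr => t t_gt0.
have tC_gt0 : 0 < t%:C by rewrite ltcR.
have [m Mm] := closure_normP Mq tC_gt0; rewrite -rnorm_lt => qm.
apply: (le_trans (dist_le Mm)).
have -> : phi - m = (phi - q) + (q - m) by rewrite addrA subrK.
by apply: le_trans (rnormD _ _) _; rewrite lerD // ltW.
Qed.

(* Parallelogram law for [phi - x] and [phi - y], whose half-sum [phi - (x + y)/2]
   is at distance at least [dist] from [M]. *)
Let minimizers_close x y (s : R) : M x -> M y -> 0 <= s -> s <= 1 ->
  rnorm (phi - x) < dist + s -> rnorm (phi - y) < dist + s ->
  rnorm (x - y) ^+ 2 <= 4 * s * (2 * dist + 1).
Proof.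
move=> Mx My s_ge0 s_le1 x_min y_min.
have Mxy : M (2^-1 *: (x + y)).
  by have := M_lin 2^-1 (M_lin 1 Mx My) M0; rewrite scale1r addr0.
have mid_ge := dist_le Mxy.
have := rnorm_parallelogram hH (phi - x) (phi - y).
have -> : phi - x + (phi - y) = 2%:R *: (phi - 2^-1 *: (x + y)).
  rewrite scalerBr scalerA divff ?pnatr_eq0 // scale1r scaler_nat mulr2n.
  by rewrite opprD addrACA.
have -> : phi - x - (phi - y) = y - x by rewrite opprB addrC addrA subrK.
rewrite rnormMn (rnormB_sym y).
move: x_min y_min mid_ge (rnorm_ge0 (phi - x)) (rnorm_ge0 (phi - y)) dist_ge0.
set a := rnorm (phi - x); set b := rnorm (phi - y); set z := rnorm (_ - _ *: _).
move=> a_lt b_lt z_ge a_ge0 b_ge0 d_ge0 para.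
have a2 : a ^+ 2 <= dist ^+ 2 + s * (2 * dist + 1) by nra.
have b2 : b ^+ 2 <= dist ^+ 2 + s * (2 * dist + 1) by nra.
have z2 : dist ^+ 2 <= z ^+ 2 by nra.
nra.
Qed.

Let minimizing_seq_cauchy (g : nat -> H) : (forall n, M (g n)) ->
  (forall n, rnorm (phi - g n) < dist + n.+1%:R^-1) -> cauchy_ex (g @ \oo).
Proof.
move=> Mg g_min e e_gt0; have eE := complex_ge0E (ltW e_gt0).
set t := complex.Re e in eE; have t_gt0 : 0 < t by rewrite -ltcR -eE.
have w_gt0 : 0 < t ^+ 2 / (4 * (2 * dist + 1)).
  by rewrite divr_gt0 ?exprn_gt0 // mulr_gt0 // ltr_wpDl // mulr_ge0.
have [N _ gN] := near_infty_natSinv_lt (PosNum w_gt0).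
exists (g N), N => // n /= Nn; rewrite -ball_normE /= eE -rnorm_lt.
pose sN : R := N.+1%:R^-1; pose sn : R := n.+1%:R^-1.
have s_ge0 : 0 <= Num.max sN sn by rewrite le_max invr_ge0 ler0n.
have s_le1 : Num.max sN sn <= 1 by rewrite ge_max !invf_le1 ?ler1n ?ltr0n.
have s_lt : Num.max sN sn < t ^+ 2 / (4 * (2 * dist + 1)).
  rewrite gt_max; apply/andP.
  by split; [apply: (gN N (leqnn N)) | apply: (gN n Nn)].
have sN_le : dist + sN <= dist + Num.max sN sn by rewrite lerD2l le_max lexx.
have sn_le : dist + sn <= dist + Num.max sN sn by rewrite lerD2l le_max lexx orbT.
have close := minimizers_close (Mg N) (Mg n) s_ge0 s_le1
  (lt_le_trans (g_min N) sN_le) (lt_le_trans (g_min n) sn_le).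
have : rnorm (g N - g n) ^+ 2 < t ^+ 2.
  rewrite ltr_pdivlMr ?mulr_gt0 ?ltr_wpDl ?mulr_ge0 // in s_lt.
  by apply: (le_lt_trans close); rewrite [4 * _]mulrC -mulrA.
have := rnorm_ge0 (g N - g n); nra.
Qed.

Let closure_cvg (f : nat -> H) q :
  (forall n, M (f n)) -> f @ \oo --> q -> closure M q.
Proof.
move=> Mf fq; apply: (closed_cvg _ (@closed_closure _ M) _ _ fq).
by apply: nearW => n; apply: subset_closure.
Qed.

Let minimizing_seq_lim (g : nat -> H) p :
  (forall n, rnorm (phi - g n) < dist + n.+1%:R^-1) -> g @ \oo --> p ->
  rnorm (phi - p) <= dist.
Proof.
move=> g_min gp; apply/ler_addgt0Pr => t t_gt0.
have t2_gt0 : 0 < t / 2 by rewrite divr_gt0.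
have [N1 _ gN1] := near_infty_natSinv_lt (PosNum t2_gt0).
have t2C_gt0 : 0 < (t / 2)%:C by rewrite ltcR.
have /cvgrPdist_lt/(_ _ t2C_gt0)[N2 _ gN2] := gp.
set n := maxn N1 N2; have := gN1 n (leq_maxl N1 N2); have := gN2 n (leq_maxr N1 N2).
rewrite /= -rnorm_lt rnormB_sym; have := g_min n.
have := rnormD (phi - g n) (g n - p); rewrite addrA subrK.
have := splitr t; set u := t / 2; set w : R := _.+1%:R^-1; lra.
Qed.

Theorem orthogonal_projection :
  exists2 p, closure M p & forall m, M m -> ip m (phi - p) = 0.
Proof.
have /choice[g gP] n : exists m, M m /\ rnorm (phi - m) < dist + n.+1%:R^-1.
  have n_gt0 : 0 < n.+1%:R^-1 :> R by rewrite invr_gt0.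
  have [_ [m Mm <-] ?] := inf_adherent n_gt0 dists_has_inf.
  by exists m.
have Mg n : M (g n) by case: (gP n).
have g_min n : rnorm (phi - g n) < dist + n.+1%:R^-1 by case: (gP n).
have [p gp] : exists p : H, g @ \oo --> p.
  exists (lim (g @ \oo)); apply: (@cauchy_cvg _ (g @ \oo)); apply: cauchy_exP.
  exact: minimizing_seq_cauchy.
exists p; first exact: closure_cvg gp.
move=> m Mm; apply: ip_eq0_of_rnorm_min => s.
apply: (le_trans (minimizing_seq_lim g_min gp)).
have -> : phi - p - s *: m = phi - (s *: m + p) by rewrite opprD addrA addrAC.
apply/dist_le_closure/(closure_cvg (f := fun n => s *: m + g n)) => [n|].
  exact: M_lin.
exact: cvgD (cvg_cst _) gp.
Qed.

End Projection.

Section SymmetricLimit.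
Variables (R : realType) (H : completeNormedModType R[i]) (ip : H -> H -> R[i]).
Variables (J : Type) (le : J -> J -> Prop) (T : J -> H -> H) (D : H -> H).
Hypotheses (hH : is_hilbert ip) (hJ : directed le).
Hypotheses (T_lin : forall j, lin_op (T j))
  (T_sym : forall j x y, ip (T j x) y = ip x (T j y))
  (TD : forall x, net_cvg le (fun j => T j x) (D x)).

Lemma strong_limit_lin : lin_op D.
Proof.
move=> a x y; apply: (net_cvg_unique hJ (TD (a *: x + y))).
rewrite (_ : (fun j => T j (a *: x + y)) = (fun j => a *: T j x + T j y)).
  apply: (net_cvgD hJ _ (TD y)).
  apply: (net_cvg_lipschitz (normr_ge0 a) _ (TD x)) => u v.
  by rewrite -scalerBr normrZ.
by apply: funext => j; rewrite T_lin.
Qed.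

Lemma strong_limit_sym x y : ip (D x) y = ip x (D y).
Proof.
have := net_cvg_lipschitz (normr_ge0 y) (ip_lipschitzl hH y) (TD x).
move/(net_cvg_unique hJ); apply.
rewrite (_ : (fun j => ip (T j x) y) = (fun j => ip x (T j y))).
  exact: net_cvg_lipschitz (normr_ge0 x) (ip_lipschitzr hH x) (TD y).
by apply: funext => j; rewrite T_sym.
Qed.

End SymmetricLimit.

Lemma symmetric_orth_ker_closure_range (R : realType)
    (H : completeNormedModType R[i]) (ip : H -> H -> R[i]) (domA : set H)
    (D : H -> H) (phi : H) :
  is_hilbert ip -> domA 0 ->
  (forall a x y, domA x -> domA y -> domA (a *: x + y)) ->
  closure domA = setT -> lin_op D -> (forall x y, ip (D x) y = ip x (D y)) ->
  (forall x, D x = 0 -> ip x phi = 0) -> closure (D @` domA) phi.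
Proof.
move=> hH dom0 dom_lin dom_dense D_lin D_sym phi_orth.
have [p Mp p_orth] : exists2 p, closure (D @` domA) p &
    forall m, (D @` domA) m -> ip m (phi - p) = 0.
  apply: (orthogonal_projection hH phi) => [|a u v [x domx <-] [y domy <-]].
    by exists 0; rewrite ?lin0.
  by exists (a *: x + y); [apply: dom_lin | rewrite D_lin].
set r := phi - p.
have r_orth m : (D @` domA) m -> ip r m = 0.
  by move=> Mm; rewrite (ipC hH) p_orth // conjC0.
have Dr0 : D r = 0.
  apply: (ipxx_eq0 hH).
  apply: (lipschitz_dense_eq0 dom_dense (normr_ge0 _) (ip_lipschitzr hH (D r))).
  by move=> a doma; rewrite D_sym r_orth //; exists a.
have r0 : r = 0.
  apply: (ipxx_eq0 hH); rewrite {2}/r (ipBr hH) phi_orth //.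
  have := lipschitz_closure_eq0 (normr_ge0 _) (ip_lipschitzr hH r) r_orth.
  by move=> -> //; rewrite subrr.
by move/eqP: r0; rewrite subr_eq0 => /eqP ->.
Qed.

Lemma isometric_net_ip_cvg0_closure (R : realType) (H : completeNormedModType R[i])
    (ip : H -> H -> R[i]) (J : Type) (le : J -> J -> Prop) (V : J -> H -> H)
    (X Y : set H) :
  is_hilbert ip -> (forall j, lin_op (V j)) -> (forall j x, `|V j x| = `|x|) ->
  (forall x y, X x -> Y y -> net_cvg le (fun j => ip x (V j y)) 0) ->
  forall x y, closure X x -> closure Y y -> net_cvg le (fun j => ip x (V j y)) 0.
Proof.
move=> hH V_lin V_iso XY_cvg0 x y Xx Yy e e_gt0.
have e3_gt0 : 0 < e / 3 by rewrite divr_gt0.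
have [x' Xx' xx'] :=
  closure_normP Xx (divr_gt0 e3_gt0 (ltr_wpDl (normr_ge0 y) ltr01)).
have [y' Yy' yy'] :=
  closure_normP Yy (divr_gt0 e3_gt0 (ltr_wpDl (normr_ge0 x') ltr01)).
have [j0 x'y'_small] := XY_cvg0 _ _ Xx' Yy' _ e3_gt0.
exists j0 => j /x'y'_small; rewrite !subr0 => x'y'_lt.
have -> : ip x (V j y) =
    ip (x - x') (V j y) + ip x' (V j (y - y')) + ip x' (V j y').
  by rewrite (linB (V_lin j)) (ipBl hH) (ipBr hH) !addrA !subrK.
rewrite [e](_ : _ = e / 3 + e / 3 + e / 3); last by field.
rewrite (le_lt_trans (ler_normD _ _)) // ltrD // (le_lt_trans (ler_normD _ _)) //.
rewrite ltrD // (le_lt_trans (cauchy_schwarz hH _ _)) // V_iso.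
  exact: mulr_lt_of_lt_divD1.
by rewrite mulrC mulr_lt_of_lt_divD1.
Qed.

Section Decay.
Variables (R : realType) (H : completeNormedModType R[i]) (ip : H -> H -> R[i]).
Variables (J : Type) (le : J -> J -> Prop) (U Uinv : J -> H -> H) (ell : J -> R).
Variables (domA : set H) (A : H -> H) (Comm : J -> H -> H) (D : H -> H).
Hypotheses (hH : is_hilbert ip) (hJ : directed le).
Hypotheses (hU : forall j, unitary_op ip (U j) (Uinv j))
  (ell_infty : net_to_infty le ell).
Hypotheses (hA : self_adjoint ip domA A)
  (hC : forall j, is_commutator ip domA A (U j) (Comm j)).
Hypothesis hD : forall psi,
  net_cvg le (fun j => ((ell j)^-1)%:C *: Comm j (Uinv j psi)) (D psi).

(* [<D chi, U_j psi>] is close to [<chi, ell_j^-1 [A, U_j] psi>] = [O(1 / ell_j)]. *)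
Lemma D_ip_unitary_cvg0_domA chi psi : domA chi -> domA psi ->
  net_cvg le (fun j => ip (D chi) (U j psi)) 0.
Proof.
move=> domchi dompsi; pose T j x := ((ell j)^-1)%:C *: Comm j (Uinv j x).
have -> : (fun j => ip (D chi) (U j psi)) = (fun j =>
    ip (D chi - T j chi) (U j psi) + ((ell j)^-1)%:C * ip chi (Comm j psi)).
  apply: funext => j; rewrite (ipBl hH) /T.
  rewrite (scaled_commutator_adjoint hH (hU j) hA (hC j)) (unitaryKV (hU j)).
  by rewrite (ipZr hH) subrK.
rewrite -[0](addr0 0); apply: (net_cvgD hJ).
  apply: (@net_cvg0_le _ _ _ _ _ _ (fun j => T j chi - D chi) `|psi|) => // [j|].
    rewrite (le_trans (cauchy_schwarz hH _ _)) // (unitary_norm hH (hU j)).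
    by rewrite mulrC distrC.
  by move=> e /(hD chi)[j0 hj0]; exists j0 => j /hj0; rewrite subr0.
pose K := `|A chi| * `|psi| + `|chi| * `|A psi|.
apply: (net_cvg0_le (k := K) _ _ (net_to_infty_inv ell_infty)) => [|j].
  by rewrite addr_ge0 // mulr_ge0.
by rewrite normrM mulrC ler_wpM2r // (commutator_ip_le hH (hU j) (hC j)).
Qed.

End Decay.

Unset Implicit Arguments.
Set Strict Implicit.

Theorem proposition2p1 (R : realType) (H : completeNormedModType R[i])
    (ip : H -> H -> R[i]) (J : Type) (le : J -> J -> Prop)
    (U Uinv : J -> H -> H) (ell : J -> R)
    (domA : set H) (A : H -> H) (Comm : J -> H -> H) (D : H -> H) :
  is_hilbert ip ->
  directed le ->
  (forall j, unitary_op ip (U j) (Uinv j)) ->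
  (forall j, 0 <= ell j) ->
  net_to_infty le ell ->
  self_adjoint ip domA A ->
  (forall j, is_commutator ip domA A (U j) (Comm j)) ->
  (forall psi : H,
     net_cvg le (fun j => ((ell j)^-1)%:C *: Comm j (Uinv j psi)) (D psi)) ->
  forall phi psi : H,
    (forall x : H, D x = 0 -> ip x phi = 0) ->
    net_cvg le (fun j => ip phi (U j psi)) 0.
Proof.
move=> hH hJ hU _ ell_infty hA hC hD phi psi phi_orth.
have [dom0 dom_lin _ dom_dense _] := hA.
have T_lin j := scaled_commutator_lin (hU j) (hC j) (ell j)^-1.
have T_sym j := scaled_commutator_adjoint hH (hU j) hA (hC j) (ell j)^-1.
have D_lin := strong_limit_lin hJ T_lin hD.
have D_sym := strong_limit_sym hH hJ T_sym hD.
apply: (@isometric_net_ip_cvg0_closure _ _ _ _ _ _ (D @` domA) domA hH).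
- by move=> j; apply: unitary_lin (hU j).
- by move=> j; apply: unitary_norm hH (hU j).
- move=> _ y [x domx <-] domy.
  exact: (D_ip_unitary_cvg0_domA hH hJ hU ell_infty hA hC hD).
- exact: symmetric_orth_ker_closure_range hH dom0 dom_lin dom_dense D_lin D_sym
    phi_orth.
- by rewrite dom_dense.
Qed.
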